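(* Let $a\geq 1$ and $b\geq 2$ be integers. For Lebesgue-almost every $x\in D$ we have $\lim_{k\to\infty}T_{a,b}^k(x)=(0,\ldots,0,x_{a+2}^{\infty},\ldots,x_{a+b}^{\infty})$ (first $a+1$ coordinates equal to $0$), where $x_j^{\infty}>0$ for $j=a+2,\ldots,a+b$.
   Context: For $n\geq 1$ let $\Lambda^n=\{x\in\mathbb{R}^n : 0\leq x_1\leq\cdots\leq x_n\}$. For integers $a,b\geq 1$ the map $T_{a,b}:\Lambda^{a+b}\to\Lambda^{a+b}$ sends $x$ to the vector obtained by arranging $x_1,\ldots,x_a,\,x_{a+1}-x_a,\ldots,x_{a+b}-x_a$ in nondecreasing order. For $b\geq 2$, $D=\{x\in\Lambda^{a+b}: x_1+x_2+\cdots+x_{a+1}\leq x_{a+2}\}$. *)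

From HB Require Import structures.
From mathcomp Require Import all_boot all_order all_algebra.
From mathcomp Require Import all_classical all_reals all_analysis.
Import numFieldNormedType.Exports.
Set Implicit Arguments. Unset Strict Implicit. Unset Printing Implicit Defensive.
Import Order.TTheory GRing.Theory Num.Theory.
Local Open Scope classical_set_scope.
Local Open Scope ring_scope.

(* Coordinates x_1..x_n of the paper are x (ord (j-1)) here (0-based). *)

(* 0-based coordinate access by a natural number: crd x k = x_{k+1}
   (and 0 when k >= n, which never happens in our uses). *)
Definition crd (R : realType) (n : nat) (x : 'rV[R]_n) (k : nat) : R :=
  nth 0 [seq x ord0 i | i <- enum 'I_n] k.

Definition Lambda (R : realType) (n : nat) : set 'rV[R]_n :=
  [set x | (forall i : 'I_n, 0 <= x ord0 i) /\
           (forall i j : 'I_n, (i <= j)%N -> x ord0 i <= x ord0 j)].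

(* T_{a,b}: arrange x_1,..,x_a, x_{a+1}-x_a, .., x_{a+b}-x_a in
   nondecreasing order.  (a >= 1 is assumed where used; a.-1 is index a.) *)
Definition Tab (R : realType) (a b : nat) (x : 'rV[R]_(a + b)) : 'rV[R]_(a + b) :=
  let s := [seq (if (i < a)%N then x ord0 i else x ord0 i - crd x a.-1)
           | i : 'I_(a + b) <- enum 'I_(a + b)] in
  let t := sort (fun u v : R => u <= v) s in
  \row_(i < a + b) nth 0 t i.

Definition Dset (R : realType) (a b : nat) : set 'rV[R]_(a + b) :=
  [set x | Lambda x /\
     \sum_(i < a + b | (i <= a)%N) x ord0 i <= crd x a.+1].

Definition lebesgue_null (R : realType) (n : nat) (A : set 'rV[R]_n) : Prop :=
  forall eps : R, 0 < eps ->
    exists lo hi : nat -> 'rV[R]_n,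
      (forall k (i : 'I_n), lo k ord0 i <= hi k ord0 i) /\
      (A `<=` \bigcup_k [set x | forall i : 'I_n,
                           lo k ord0 i <= x ord0 i <= hi k ord0 i]) /\
      (forall N, \sum_(k < N) \prod_(i < n) (hi k ord0 i - lo k ord0 i) <= eps).

From HB Require Import structures.
From mathcomp Require Import all_boot all_order all_algebra.
From mathcomp Require Import all_classical all_reals all_analysis.
From mathcomp Require Import ring lra zify.
Import numFieldNormedType.Exports.
Import Order.TTheory GRing.Theory Num.Theory.
Local Open Scope classical_set_scope.
Local Open Scope ring_scope.
Set Implicit Arguments.
Unset Strict Implicit.
Unset Printing Implicit Defensive.

(* Split the coordinates of x in D into the head P = (x_1, ..., x_{a+1}) and the tail.
   Since x_1 + ... + x_{a+1} <= x_{a+2}, this stays true along the orbit, so T_{a,b} never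
   mixes head and tail: it replaces the top entry of P by (top - penultimate), re-sorts P,
   and shifts the whole tail down by the penultimate entry.  The head sum is nonnegative
   and drops by the penultimate entry at each step.  If the head entries admit no integer
   relation, the penultimate entry never vanishes; once it is below half of the top entry
   it stays frozen, and a frozen positive drop is impossible.  Hence the top entry, and with
   it the whole head, tends to 0, while the tail tends to x_j - (x_1 + ... + x_{a+1}) > 0
   unless x_{a+2} = x_1 + ... + x_{a+1}.  So every exceptional point satisfies a nontrivial
   integer relation, and each rational hyperplane is covered by boxes of arbitrarily small
   total volume. *)

(** * The map T_{a,b} on coordinate sequences *)

Section TabSeq.
Variable R : realType.
Implicit Types (s A B P Q : seq R) (a : nat).

Definition row_seq {n} (x : 'rV[R]_n) : seq R := [seq x ord0 i | i <- enum 'I_n].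

Lemma size_row_seq n (x : 'rV[R]_n) : size (row_seq x) = n.
Proof. by rewrite size_map size_enum_ord. Qed.

Lemma nth_row_seq n (x : 'rV[R]_n) (i : 'I_n) : (row_seq x)`_i = x ord0 i.
Proof. by rewrite (nth_map i) ?size_enum_ord // nth_ord_enum. Qed.

Definition tab_seq a s : seq R :=
  sort <=%R (take a s ++ [seq y - s`_a.-1 | y <- drop a s]).

Lemma row_seq_Tab a b (x : 'rV[R]_(a + b)) : row_seq (Tab x) = tab_seq a (row_seq x).
Proof.
set s := row_seq x; set t := tab_seq a s.
have st : size t = (a + b)%N.
  by rewrite size_sort size_cat size_map size_drop size_takel size_row_seq ?leq_addr ?addKn.
have -> : row_seq (Tab x) = [seq t`_i | i <- iota 0 (a + b)].
  rewrite /row_seq -val_enum_ord -map_comp; apply: eq_map => j /=; rewrite mxE.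
  congr nth; congr sort.
  have -> : [seq (if (i < a)%N then x ord0 i else x ord0 i - crd x a.-1)
              | i : 'I_(a + b) <- enum 'I_(a + b)]
      = [seq (if (i < a)%N then s`_i else s`_i - s`_a.-1) | i <- iota 0 (a + b)].
    by rewrite -val_enum_ord -map_comp; apply: eq_map => i /=; rewrite nth_row_seq.
  rewrite iotaD map_cat; congr cat.
    transitivity [seq s`_i | i <- iota 0 a].
      by apply/eq_in_map => i; rewrite mem_iota => /andP[_ ->].
    by rewrite map_nth_iota0 // size_row_seq leq_addr.
  transitivity [seq s`_i - s`_a.-1 | i <- iota a b].
    by apply/eq_in_map => i; rewrite mem_iota leqNgt => /andP [/negbTE ->].
  rewrite (map_comp (fun y => y - s`_a.-1)) map_nth_iota ?size_row_seq ?addKn //.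
  by rewrite take_oversize // size_drop size_row_seq addKn.
by rewrite -st map_nth_iota0 // take_size.
Qed.

Lemma sort_cat_le A B : sorted <=%R B -> {in A & B, forall x y, x <= y} ->
  sort <=%R (A ++ B) = sort <=%R A ++ B.
Proof.
move=> sB leAB; apply: le_sorted_eq; first exact: sort_le_sorted.
  rewrite sorted_pairwise; last exact: le_trans.
  rewrite pairwise_cat -!sorted_pairwise ?sort_le_sorted ?sB ?andbT; try exact: le_trans.
  by apply/allrelP => x y; rewrite mem_sort; exact: leAB.
by rewrite perm_sort perm_sym perm_cat2r perm_sort.
Qed.

Record head_inv a P : Prop := HeadInv {
  size_head : size P = a.+1;
  sorted_head : sorted <=%R P;
  head_ge0 : all (>= 0) P }.

Lemma head_split a P : size P = a.+1 -> P = rcons (take a P) P`_a.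
Proof. by move=> sP; rewrite -take_nth ?sP // -sP take_size. Qed.

Lemma tab_seq_head a P : size P = a.+1 ->
  tab_seq a P = sort <=%R (rcons (take a P) (P`_a - P`_a.-1)).
Proof. by move=> sP; rewrite /tab_seq (drop_nth 0) ?sP // drop_oversize ?sP // cats1. Qed.

Section HeadStep.
Variables (a : nat) (P : seq R).
Hypotheses (a_gt0 : (0 < a)%N) (hP : head_inv a P).

Let sP : size P = a.+1 := size_head hP.
Let pen_lt : (a.-1 < size P)%N. Proof. by rewrite sP ltnS leq_pred. Qed.

Lemma mem_head_le_top x : x \in P -> 0 <= x <= P`_a.
Proof.
move=> xP; rewrite (allP (head_ge0 hP)) //=; have [i + <-] := nthP 0 xP.
by rewrite sP => iP; apply: (le_sorted_leq_nth 0 (sorted_head hP)); rewrite ?inE ?sP.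
Qed.

Lemma mem_take_le_pen x : x \in take a P -> x <= P`_a.-1.
Proof.
move=> /(nthP 0) [i]; rewrite size_takel ?sP // => ia <-; rewrite nth_take //.
by apply: (le_sorted_leq_nth 0 (sorted_head hP)); rewrite ?inE ?sP; lia.
Qed.

Lemma pen_in_take : P`_a.-1 \in take a P.
Proof.
by rewrite -(nth_take 0 (_ : a.-1 < a)%N) ?ltn_predL // mem_nth // size_takel ?sP ?ltn_predL.
Qed.

Lemma pen_ge0 : 0 <= P`_a.-1.
Proof. by have /andP [] := mem_head_le_top (mem_nth 0 pen_lt). Qed.

Lemma pen_le_top : P`_a.-1 <= P`_a.
Proof. by have /andP [] := mem_head_le_top (mem_nth 0 pen_lt). Qed.

Lemma sum_head_ge0 : 0 <= \sum_(y <- P) y.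
Proof. by rewrite big_seq sumr_ge0 // => y /mem_head_le_top /andP []. Qed.

Lemma sum_head : \sum_(y <- P) y = \sum_(y <- take a P) y + P`_a.
Proof. by rewrite {1}(head_split sP) big_rcons. Qed.

Lemma pen_top_le_sum : P`_a.-1 + P`_a <= \sum_(y <- P) y.
Proof.
rewrite sum_head lerD2r (big_rem _ pen_in_take) /= lerDl.
rewrite big_seq sumr_ge0 // => y /mem_rem /mem_take /mem_head_le_top /andP [] //.
Qed.

Lemma sum_head_le_top : \sum_(y <- P) y <= P`_a *+ a.+1.
Proof.
rewrite (big_nth 0) big_mkord -sP -[X in _ *+ X]card_ord -sumr_const.
by apply: ler_sum => i _; have /andP [] := mem_head_le_top (mem_nth 0 (ltn_ord i)).
Qed.

Lemma mem_tab_seq_le_top x : x \in tab_seq a P -> x <= P`_a.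
Proof.
rewrite tab_seq_head // mem_sort mem_rcons inE => /orP [/eqP ->|/mem_take_le_pen xpen].
  by rewrite lerBlDr lerDl pen_ge0.
exact: le_trans xpen pen_le_top.
Qed.

Lemma sum_tab_seq : \sum_(y <- tab_seq a P) y = \sum_(y <- P) y - P`_a.-1.
Proof.
by rewrite tab_seq_head // (perm_big _ (permEl (perm_sort _ _))) big_rcons sum_head /= addrA.
Qed.

Lemma head_inv_tab_seq : head_inv a (tab_seq a P).
Proof.
split; last 2 first.
- exact: sort_le_sorted.
- rewrite tab_seq_head // (perm_all _ (permEl (perm_sort _ _))) all_rcons.
  rewrite subr_ge0 pen_le_top /=; apply/allP => y /mem_take.
  by move=> /mem_head_le_top /andP [].
by rewrite tab_seq_head // size_sort size_rcons size_takel ?sP.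
Qed.

Lemma top_tab_seq_le : (tab_seq a P)`_a <= P`_a.
Proof.
by apply/mem_tab_seq_le_top/mem_nth; rewrite (size_head head_inv_tab_seq).
Qed.

(* If the penultimate entry is less than half the top one, the new entry [top - pen]
   lands on top and the penultimate entry does not move. *)
Lemma pen_tab_seq_frozen : P`_a.-1 < P`_a - P`_a.-1 -> (tab_seq a P)`_a.-1 = P`_a.-1.
Proof.
move=> pen_lt_new; have sTa : size (take a P) = a by rewrite size_takel ?sP.
rewrite tab_seq_head // sort_le_id; last first.
  rewrite sorted_pairwise; last exact: le_trans.
  rewrite pairwise_rcons -sorted_pairwise ?take_sorted ?(sorted_head hP) //;
    last exact: le_trans.
  rewrite andbT; apply/allP => y /mem_take_le_pen ypen.
  exact: ltW (le_lt_trans ypen pen_lt_new).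
by rewrite nth_rcons sTa ltn_predL a_gt0 nth_take ?ltn_predL.
Qed.

Lemma tab_seq_cat Q : sorted <=%R Q -> {in Q, forall y, \sum_(z <- P) z <= y} ->
  tab_seq a (P ++ Q) = tab_seq a P ++ [seq y - P`_a.-1 | y <- Q].
Proof.
move=> sQ sumQ; rewrite /tab_seq take_cat drop_cat nth_cat sP !ltnS leqnn leq_pred.
rewrite map_cat catA sort_cat_le //.
  by rewrite sorted_map; apply: sub_sorted sQ => x y /=; rewrite lerD2r.
move=> x y xT /mapP [z /sumQ sumz ->].
have xtop : x <= P`_a by apply: mem_tab_seq_le_top; rewrite mem_sort.
by rewrite lerBrDr (le_trans _ sumz) // (le_trans _ pen_top_le_sum) // addrC lerD2l.
Qed.

End HeadStep.

Lemma iter_tab_seq_cat a P Q k : (0 < a)%N -> head_inv a P -> sorted <=%R Q ->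
    {in Q, forall y, \sum_(z <- P) z <= y} ->
  iter k (tab_seq a) (P ++ Q) = iter k (tab_seq a) P ++
    [seq y - (\sum_(z <- P) z - \sum_(z <- iter k (tab_seq a) P) z) | y <- Q].
Proof.
move=> a_gt0; elim: k P Q => [|k IHk] P Q hP sQ sumQ.
  by rewrite /= subrr; under eq_map do rewrite subr0; rewrite map_id.
rewrite !iterSr tab_seq_cat // IHk //.
- by rewrite -map_comp; congr cat; apply: eq_map => y /=; rewrite sum_tab_seq //; ring.
- exact: head_inv_tab_seq.
- by rewrite sorted_map; apply: sub_sorted sQ => x y /=; rewrite lerD2r.
by move=> _ /mapP [y /sumQ sumy ->]; rewrite sum_tab_seq // lerD2r.
Qed.

End TabSeq.

(** * Convergence of the head *)

Section Decrements.
Variable R : realType.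

Lemma no_uniform_decrease (S d : nat -> R) (K : nat) (delta : R) :
  (forall k, 0 <= S k) -> (forall k, S k.+1 = S k - d k) -> 0 < delta ->
  ~ (forall k, (K <= k)%N -> delta <= d k).
Proof.
move=> S_ge0 Sd delta_gt0 dK.
have S_drop j : S (K + j)%N <= S K - j%:R * delta.
  elim: j => [|i IHi]; first by rewrite addn0 mul0r subr0.
  rewrite addnS Sd -natr1 mulrDl mul1r; have := dK (K + i)%N (leq_addr _ _); lra.
have [j Sj] : exists j : nat, S K < j%:R * delta.
  exists (Num.Def.archi_bound (S K / delta)).
  by rewrite -ltr_pdivrMr // archi_boundP // divr_ge0 // ltW.
by have := S_drop j; have := S_ge0 (K + j)%N; lra.
Qed.

(* Once [d] drops below half of [M] it freezes, and a frozen positive decrement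
   cannot be sustained by the nonnegative [S]. *)
Lemma eventually_lt_frozen (S d M : nat -> R) :
    (forall k, 0 <= S k) -> (forall k, S k.+1 = S k - d k) -> (forall k, 0 < d k) ->
    (forall k, d k < M k - d k -> d k.+1 = d k) ->
  forall eps, 0 < eps -> exists k, M k < eps.
Proof.
move=> S_ge0 Sd d_gt0 frozen eps eps_gt0; apply/not_existsP => M_ge.
have {}M_ge k : eps <= M k by rewrite leNgt; apply/negP => /M_ge.
have [K dK] : exists K, d K < eps / 2.
  apply/not_existsP => d_ge; have half_gt0 : 0 < eps / 2 by rewrite divr_gt0.
  apply: (@no_uniform_decrease S d 0 (eps / 2) S_ge0 Sd half_gt0) => k _.
  by rewrite leNgt; apply/negP => /d_ge.
have dKj j : d (K + j)%N = d K.
  elim: j => [|i IHi]; first by rewrite addn0.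
  by rewrite addnS frozen IHi //; have := M_ge (K + i)%N; lra.
apply: (@no_uniform_decrease S d K (d K) S_ge0 Sd (d_gt0 K)) => k /subnKC <-.
by rewrite dKj.
Qed.
End Decrements.

Section IntIndep.
Variable R : realType.
Implicit Types (s P : seq R) (a : nat).

(* Coefficients are attached to values, so the entries must be distinct. *)
Definition int_indep s :=
  uniq s /\ forall c : R -> int, \sum_(y <- s) (c y)%:~R * y = 0 -> {in s, forall y, c y = 0}.

Lemma sum_indicator s y : uniq s -> y \in s -> \sum_(z <- s) ((z == y)%:Z)%:~R * z = y.
Proof.
move=> us ys; rewrite (bigD1_seq y) //= eqxx mul1r big1 ?addr0 // => z /negbTE ->.
by rewrite mul0r.
Qed.

Lemma int_indep_perm s t : perm_eq s t -> int_indep s -> int_indep t.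
Proof.
move=> st [us indep_s]; split; first by rewrite -(perm_uniq st).
by move=> c; rewrite -(perm_big _ st) => /indep_s c0 y; rewrite -(perm_mem st); exact: c0.
Qed.

Lemma int_indep_neq0 s : int_indep s -> 0 \notin s.
Proof.
case=> _ indep_s; apply/negP => s0.
suff sum0 : \sum_(y <- s) ((y == 0)%:Z)%:~R * y = 0.
  by have := indep_s _ sum0 0 s0; rewrite /= eqxx.
by rewrite big1 // => z _; case: eqP => [->|_]; rewrite ?mulr0 ?mul0r.
Qed.

(* Replacing the last entry [v] by [v - d] is an invertible integer change of
   variables, so it preserves integer independence. *)
Lemma int_indep_rcons_sub s v d : d \in s -> int_indep (rcons s v) -> int_indep (rcons s (v - d)).
Proof.
move=> ds [usv indep_sv]; move: (usv); rewrite rcons_uniq => /andP [vs us]; set w := v - d.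
have sv z : z \in s -> z \in rcons s v by rewrite mem_rcons inE => ->; rewrite orbT.
have vsv : v \in rcons s v by rewrite mem_rcons mem_head.
have neq_v z : z \in s -> (z == v) = false by move=> zs; apply: contraNF vs => /eqP <-.
have wns : w \notin s.
  apply/negP => ws; pose c z := (z == v)%:Z - (z == d)%:Z - (z == w)%:Z.
  have sum0 : \sum_(z <- rcons s v) (c z)%:~R * z = 0.
    under eq_bigr do rewrite /c !intrB !mulrBl.
    have [dsv wsv] := (sv d ds, sv w ws).
    by rewrite !sumrB !sum_indicator // /w; ring.
  have := indep_sv _ sum0 v vsv.
  by rewrite /c eqxx (eq_sym v) neq_v // (eq_sym v) neq_v // => /eqP.
split; first by rewrite rcons_uniq wns.
move=> c; rewrite big_rcons /= => rel.
pose c' z := if z == v then c w else c z - (z == d)%:Z * c w.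
have rel' : \sum_(z <- rcons s v) (c' z)%:~R * z = 0.
  rewrite big_rcons /= {2}/c' eqxx -[RHS]rel.
  under eq_big_seq => z zs do rewrite /c' neq_v // intrB intrM mulrBl mulrAC.
  by rewrite sumrB -mulr_suml sum_indicator // /w; ring.
have cw0 : c w = 0 by have := indep_sv c' rel' v vsv; rewrite /c' eqxx.
move=> y; rewrite mem_rcons inE => /orP [/eqP -> // | ys].
by have := indep_sv c' rel' y (sv y ys); rewrite /c' neq_v // cw0 mulr0 subr0.
Qed.

Lemma int_indep_tab_seq a P : (0 < a)%N -> head_inv a P -> int_indep P -> int_indep (tab_seq a P).
Proof.
move=> a_gt0 hP indep_P; rewrite tab_seq_head ?(size_head hP) //.
apply: (int_indep_perm (s := rcons (take a P) (P`_a - P`_a.-1))).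
  by rewrite perm_sym perm_sort.
by apply: int_indep_rcons_sub (pen_in_take a_gt0 hP) _; rewrite -head_split ?(size_head hP).
Qed.
End IntIndep.

Section HeadOrbit.
Variable R : realType.

Definition orbit_limit a (P Q : seq R) : seq R :=
  nseq a.+1 0 ++ [seq y - \sum_(z <- P) z | y <- Q].

Variables (a : nat) (P0 Q0 : seq R).
Hypotheses (a_gt0 : (0 < a)%N) (hP0 : head_inv a P0).

Let P k := iter k (tab_seq a) P0.

Lemma head_inv_iter k : head_inv a (P k).
Proof. by elim: k => [|k IHk]; rewrite /P ?iterS //; apply: head_inv_tab_seq. Qed.

Lemma top_iter_small eps : int_indep P0 -> 0 < eps ->
  exists K, forall k, (K <= k)%N -> (P k)`_a < eps.
Proof.
move=> indep_P0 eps_gt0; have hP := head_inv_iter.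
have indep_P k : int_indep (P k).
  elim: k => [|k IHk]; rewrite /P ?iterS //; apply: int_indep_tab_seq => //; exact: hP.
have pen_gt0 k : 0 < (P k)`_a.-1.
  rewrite lt_def pen_ge0 // andbT; apply: contraNneq (int_indep_neq0 (indep_P k)) => <-.
  by apply: mem_nth; rewrite (size_head (hP k)) ltnS leq_pred.
have S_ge0 k : 0 <= \sum_(y <- P k) y := sum_head_ge0 (hP k).
have S_step k : \sum_(y <- P k.+1) y = \sum_(y <- P k) y - (P k)`_a.-1.
  by rewrite /P iterS (sum_tab_seq (hP k)).
have frozen k : (P k)`_a.-1 < (P k)`_a - (P k)`_a.-1 -> (P k.+1)`_a.-1 = (P k)`_a.-1.
  by rewrite /P iterS; exact: (pen_tab_seq_frozen a_gt0 (hP k)).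
have [K topK] := eventually_lt_frozen S_ge0 S_step pen_gt0 frozen eps_gt0.
exists K => k /subnKC <-; elim: (k - K)%N => [|j IHj]; first by rewrite addn0.
by rewrite addnS /P iterS (le_lt_trans (top_tab_seq_le a_gt0 (hP _))).
Qed.

Lemma dist_orbit_limit k i : sorted <=%R Q0 -> {in Q0, forall y, \sum_(z <- P0) z <= y} ->
  `|(orbit_limit a P0 Q0)`_i - (iter k (tab_seq a) (P0 ++ Q0))`_i| <= (P k)`_a *+ a.+1.
Proof.
move=> sQ0 sumQ0; have hP := head_inv_iter k.
have a_lt : (a < size (P k))%N by rewrite (size_head hP).
have /andP [top_ge0 _] := mem_head_le_top hP (mem_nth 0 a_lt).
rewrite iter_tab_seq_cat // /orbit_limit !nth_cat size_nseq (size_head hP).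
case: ltnP => [ia | ai].
  have /andP [x_ge0 x_le] := mem_head_le_top hP (mem_nth 0 (leq_trans ia a_lt)).
  by rewrite nth_nseq ia sub0r normrN ger0_norm // (le_trans x_le) // mulrS lerDl mulrn_wge0.
have S_ge0 := sum_head_ge0 hP.
case: (ltnP (i - a.+1) (size Q0)) => iQ; last first.
  rewrite [nth _ [seq _ | _ <- Q0] _]nth_default ?size_map //.
  by rewrite [nth _ [seq _ | _ <- Q0] _]nth_default ?size_map // subr0 normr0 mulrn_wge0.
rewrite !(nth_map 0) //; set q := Q0`_(i - a.+1); set S0 := \sum_(z <- P0) z.
have -> : q - S0 - (q - (S0 - \sum_(z <- P k) z)) = - \sum_(z <- P k) z by ring.
by rewrite normrN ger0_norm // sum_head_le_top.
Qed.
End HeadOrbit.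

Section RowOrbit.
Variable R : realType.

Lemma cvg_row_uniform n (u : nat -> 'rV[R]_n) (y : 'rV[R]_n) (e : nat -> R) :
    (forall k i, `|y ord0 i - u k ord0 i| <= e k) ->
    (forall eps, 0 < eps -> exists K, forall k, (K <= k)%N -> e k < eps) ->
  u @ \oo --> y.
Proof.
move=> uy e_small; apply/cvgrPdist_lt => eps eps_gt0.
have [K eK] := e_small eps eps_gt0; apply: filterS (nbhs_infty_ge K) => k kK.
change (mx_norm (y - u k) < eps); rewrite mx_normrE; apply: bigmax_lt => // -[i0 i] _ /=.
by rewrite !mxE (ord1 i0) (le_lt_trans (uy k i)) ?eK.
Qed.

Lemma row_seq_iter_Tab a b (x : 'rV[R]_(a + b)) k :
  row_seq (iter k (@Tab R a b) x) = iter k (tab_seq a) (row_seq x).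
Proof. by elim: k => [|k IHk] //; rewrite !iterS row_seq_Tab IHk. Qed.

Lemma Lambda_row_seq n (x : 'rV[R]_n) :
  Lambda x -> sorted <=%R (row_seq x) /\ all (>= 0) (row_seq x).
Proof.
case=> x_ge0 x_mono; split; last by apply/allP => _ /mapP [i _ ->]; exact: x_ge0.
apply/(sortedP 0) => i; rewrite size_row_seq => i1n.
have in_ : (i < n)%N by apply: ltnW.
by rewrite -[i]/(val (Ordinal in_)) -[i.+1]/(val (Ordinal i1n)) !nth_row_seq x_mono /=.
Qed.

Lemma sum_take_row_seq n (x : 'rV[R]_n) K : (K <= n)%N ->
  \sum_(i < n | (i < K)%N) x ord0 i = \sum_(y <- take K (row_seq x)) y.
Proof.
move=> Kn; rewrite (big_nth 0) size_takel ?size_row_seq // big_mkord.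
rewrite (big_ord_widen _ (fun i => (take K (row_seq x))`_i) Kn).
by apply: eq_bigr => i iK; rewrite nth_take // nth_row_seq.
Qed.
End RowOrbit.

(** * Convergence on D *)

Section DsetOrbit.
Variable R : realType.
Variables (a b : nat) (x : 'rV[R]_(a + b)).
Hypotheses (a_gt0 : (0 < a)%N) (b_ge2 : (2 <= b)%N) (xD : Dset x).

Let s := row_seq x.
Let a1_lt : (a.+1 < a + b)%N. Proof. by rewrite -addn1 ltn_add2l. Qed.

Lemma Dset_head_inv : head_inv a (take a.+1 s).
Proof.
have [sorted_s s_ge0] := Lambda_row_seq xD.1.
split; first by rewrite size_takel ?size_row_seq // ltnW.
  exact: take_sorted.
by apply/allP => y /mem_take /(allP s_ge0).
Qed.

Lemma Dset_tail_ge y : y \in drop a.+1 s -> s`_a.+1 <= y.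
Proof.
have [sorted_s _] := Lambda_row_seq xD.1.
move=> /(nthP 0) [j]; rewrite size_drop nth_drop => j_lt <-.
by apply: (le_sorted_leq_nth 0 sorted_s); rewrite ?inE ?leq_addr //;
  move: j_lt; rewrite /s size_row_seq; lia.
Qed.

Lemma Dset_sum_head_le : \sum_(y <- take a.+1 s) y <= s`_a.+1.
Proof. by rewrite -sum_take_row_seq ?(ltnW a1_lt) //; exact: xD.2. Qed.

Lemma Dset_cvg : int_indep (take a.+1 s) -> \sum_(y <- take a.+1 s) y != s`_a.+1 ->
  exists y : 'rV[R]_(a + b), (fun k => iter k (@Tab R a b) x) @ \oo --> y /\
    (forall i : 'I_(a + b), (i <= a)%N -> y ord0 i = 0) /\
    (forall i : 'I_(a + b), (a < i)%N -> 0 < y ord0 i).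
Proof.
move=> indep_P0 sum_neq; set P0 := take a.+1 s; set Q0 := drop a.+1 s.
have hP0 : head_inv a P0 := Dset_head_inv.
have sum_lt : \sum_(z <- P0) z < s`_a.+1 by rewrite lt_neqAle sum_neq Dset_sum_head_le.
have sumQ0 : {in Q0, forall y, \sum_(z <- P0) z <= y}.
  by move=> y /Dset_tail_ge; exact/le_trans/ltW.
have sQ0 : sorted <=%R Q0 by apply: drop_sorted; exact: (Lambda_row_seq xD.1).1.
exists (\row_(i < a + b) (orbit_limit a P0 Q0)`_i); split; last split.
- apply: (cvg_row_uniform (e := fun k => (iter k (tab_seq a) P0)`_a *+ a.+1)).
    move=> k i; rewrite mxE -nth_row_seq row_seq_iter_Tab -/s -(cat_take_drop a.+1 s).
    exact: dist_orbit_limit.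
  move=> eps eps_gt0; have eps'_gt0 : 0 < eps / a.+1%:R by rewrite divr_gt0.
  have [K topK] := top_iter_small a_gt0 hP0 indep_P0 eps'_gt0.
  by exists K => k /topK; rewrite ltr_pdivlMr // mulr_natr.
- by move=> i ia; rewrite mxE nth_cat size_nseq nth_nseq ltnS ia.
move=> i ai; rewrite mxE nth_cat size_nseq ltnNge ai /=.
have iQ : (i - a.+1 < size Q0)%N by have := ltn_ord i; rewrite size_drop /s size_row_seq; lia.
by rewrite (nth_map 0) // subr_gt0 (lt_le_trans sum_lt) // Dset_tail_ge // mem_nth.
Qed.
End DsetOrbit.

(** * Covers by boxes and null sets *)

Lemma sum_pickle_inv_le (R : realType) N (v : nat -> nat -> R) : (forall p q, 0 <= v p q) ->
  exists M, \sum_(k < N) oapp (fun pq => v pq.1 pq.2) 0 (@pickle_inv (nat * nat)%type k)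
            <= \sum_(p < M) \sum_(q < M) v p q.
Proof.
move=> v_ge0.
pose bound k := oapp (fun pq => maxn pq.1 pq.2) 0%N (@pickle_inv (nat * nat)%type k).
exists (\max_(k < N) bound k).+1; set M := _.+1.
have pickle_invE k (t : nat * nat) :
    (@pickle_inv (nat * nat)%type k == Some t) = (k == pickle t).
  apply/eqP/eqP => [e|->]; last exact: pickleK_inv.
  by rewrite -(@pickle_invK (nat * nat)%type k) e.
pose P k (t : 'I_M * 'I_M) := pickle_inv k == Some (val t.1, val t.2).
have -> : \sum_(k < N) oapp (fun pq => v pq.1 pq.2) 0 (pickle_inv k) =
    \sum_(k < N) \sum_(t | P k t) v t.1 t.2.
  apply: eq_bigr => k _; rewrite /P.
  case E : (pickle_inv k) => [[p q]|] /=; last by rewrite big_pred0.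
  have [pM qM] : (p < M)%N /\ (q < M)%N.
    have := @leq_bigmax _ (fun k : 'I_N => bound k) k.
    by rewrite /bound E /= geq_max !ltnS => /andP [].
  by rewrite (big_pred1 (Ordinal pM, Ordinal qM)).
rewrite (exchange_big_dep xpredT) // pair_bigA /= ler_sum // => t _.
rewrite (eq_bigl (fun k : 'I_N => val k == pickle (val t.1, val t.2))) => [|k];
  last exact: pickle_invE.
case: (ltnP (pickle (val t.1, val t.2)) N) => [lt|ge].
  by rewrite (big_pred1 (Ordinal lt)).
rewrite big_pred0 => [|k]; first exact: v_ge0.
by apply: contraTF ge => /eqP <-; rewrite -ltnNge ltn_ord.
Qed.

Section BoxCover.
Variables (R : realType) (n : nat).
Hypothesis n_gt0 : (0 < n)%N.
Implicit Types (A B : set 'rV[R]_n) (V W : R).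

Definition box_vol (lo hi : 'rV[R]_n) : R := \prod_(i < n) (hi ord0 i - lo ord0 i).

Definition box_cover_by A V (lo hi : nat -> 'rV[R]_n) :=
  (forall k (i : 'I_n), lo k ord0 i <= hi k ord0 i) /\
  (A `<=` \bigcup_k [set x | forall i : 'I_n, lo k ord0 i <= x ord0 i <= hi k ord0 i]) /\
  (forall N, \sum_(k < N) box_vol (lo k) (hi k) <= V).

Definition box_cover A V := exists lo hi, box_cover_by A V lo hi.

Lemma box_cover_sub A B V : A `<=` B -> box_cover B V -> box_cover A V.
Proof.
move=> AB [lo [hi [lohi [Bcov vol]]]]; exists lo, hi; split => //; split => //.
by move=> x /AB /Bcov.
Qed.

Lemma box_cover_le A V W : V <= W -> box_cover A V -> box_cover A W.
Proof.
move=> VW [lo [hi [lohi [Acov vol]]]]; exists lo, hi; split => //; split => //.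
by move=> N; apply: le_trans (vol N) VW.
Qed.

Lemma prod_flat (F : 'I_n -> R) (i0 : 'I_n) : F i0 = 0 -> \prod_(i < n) F i = 0.
Proof. by move=> Fi0; rewrite (bigD1 i0) //= Fi0 mul0r. Qed.

Let i0 : 'I_n := Ordinal n_gt0.

Lemma box_cover_box A (l u : 'I_n -> R) : (forall i, l i <= u i) ->
    A `<=` [set x | forall i, l i <= x ord0 i <= u i] ->
  box_cover A (\prod_(i < n) (u i - l i)).
Proof.
move=> lu Abox; pose pad (v : 'I_n -> R) k : 'rV[R]_n := if k is 0%N then \row_i v i else 0.
exists (pad l), (pad u); split; last split.
- by case=> [|k] i; rewrite ?mxE.
- by move=> x /Abox xbox; exists 0%N => // i; rewrite !mxE.
case=> [|N]; first by rewrite big_ord0 prodr_ge0 // => i _; rewrite subr_ge0.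
rewrite big_ord_recl [X in _ + X]big1 => [|k _] /=.
  rewrite addr0 /box_vol [X in X <= _](eq_bigr (fun i => u i - l i)) // => i _.
  by rewrite !mxE.
by rewrite /box_vol (prod_flat (i0 := i0)) // subrr.
Qed.

Lemma box_cover0 : box_cover set0 0.
Proof.
have := @box_cover_box set0 (fun _ => 0) (fun _ => 0) (fun _ => lexx _) (sub0set _).
by rewrite (prod_flat (i0 := i0)) // subrr.
Qed.

(* The [q]-th box of the [p]-th cover becomes box number [pickle (p, q)]. *)
Lemma box_cover_bigcup A (B : nat -> set 'rV[R]_n) (V : nat -> R) W :
    A `<=` \bigcup_k B k -> (forall k, box_cover (B k) (V k)) ->
    (forall K, \sum_(k < K) V k <= W) ->
  box_cover A W.
Proof.
move=> AB coverB VW.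
have /choice [f fcov] k : exists lh, box_cover_by (B k) (V k) lh.1 lh.2.
  by have [lo [hi cov]] := coverB k; exists (lo, hi).
pose sel k := oapp (fun pq : nat * nat => ((f pq.1).1 pq.2, (f pq.1).2 pq.2)) (0, 0)
  (pickle_inv k).
exists (fun k => (sel k).1), (fun k => (sel k).2); split; last split.
- move=> k i; rewrite /sel; case: pickle_inv => [[p q]|] /=; last by rewrite mxE.
  by have [-> _] := fcov p.
- move=> x /AB [p _ /(fcov p).2.1 [q _ xq]]; exists (pickle (p, q)) => //.
  by rewrite /sel pickleK_inv.
move=> N; pose v p q := box_vol ((f p).1 q) ((f p).2 q).
have v_ge0 p q : 0 <= v p q.
  by apply: prodr_ge0 => i _; rewrite subr_ge0; have [-> _] := fcov p.
have [M sumM] := sum_pickle_inv_le N v_ge0.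
apply: le_trans (VW M); apply: le_trans (le_trans _ sumM) _.
  apply: ler_sum => k _; rewrite /sel; case: pickle_inv => [[p q]|] //=.
  by rewrite /box_vol (prod_flat (i0 := i0)) // subrr.
by apply: ler_sum => p _; have [_ [_ ->]] := fcov p.
Qed.
End BoxCover.

Section NullSets.
Variables (R : realType) (n : nat).
Hypothesis n_gt0 : (0 < n)%N.
Implicit Types (A B : set 'rV[R]_n).

Lemma geometric_partial_sum_le (eps : R) K : 0 <= eps -> \sum_(k < K) eps / 2 ^+ k.+1 <= eps.
Proof.
move=> eps_ge0; suff -> : \sum_(k < K) eps / 2 ^+ k.+1 = eps - eps / 2 ^+ K.
  by rewrite lerBlDr lerDl divr_ge0 // exprn_ge0.
elim: K => [|K IHK]; first by rewrite big_ord0 expr0 divr1 subrr.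
by rewrite big_ord_recr /= IHK exprS; field; rewrite expf_neq0.
Qed.

Lemma lebesgue_null_sub A B : A `<=` B -> lebesgue_null B -> lebesgue_null A.
Proof. by move=> AB nullB eps eps_gt0; apply: box_cover_sub AB (nullB eps eps_gt0). Qed.

Lemma lebesgue_null_bigcup A (B : nat -> set 'rV[R]_n) :
  A `<=` \bigcup_k B k -> (forall k, lebesgue_null (B k)) -> lebesgue_null A.
Proof.
move=> AB nullB eps eps_gt0.
apply: (box_cover_bigcup n_gt0 AB (V := fun k => eps / 2 ^+ k.+1)).
  by move=> k; apply: nullB; rewrite divr_gt0 // exprn_gt0.
by move=> K; apply: geometric_partial_sum_le; exact: ltW.
Qed.

Lemma lebesgue_null0 : lebesgue_null (@set0 'rV[R]_n).
Proof. by move=> eps eps_gt0; apply: box_cover_le (ltW eps_gt0) (box_cover0 R n_gt0). Qed.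
End NullSets.

Section Slabs.
Variables (R : realType) (n : nat).
Implicit Types (c l u : 'I_n -> R) (t delta eta : R).

Definition upd (v : 'I_n -> R) (i0 : 'I_n) (y : R) i := if i == i0 then y else v i.

Definition slab c l u t delta : set 'rV[R]_n :=
  [set x | (forall i, l i <= x ord0 i <= u i) /\ `|\sum_i c i * x ord0 i - t| <= delta].

Definition face_vol (j : 'I_n) l u := \prod_(i < n | i != j) (u i - l i).

Lemma face_vol_split j i0 l u : i0 != j ->
  face_vol j l u = (u i0 - l i0) * \prod_(i < n | (i != j) && (i != i0)) (u i - l i).
Proof. by move=> i0j; rewrite /face_vol (bigD1 i0). Qed.

Lemma face_vol_upd j i0 l u a b : i0 != j ->
  face_vol j (upd l i0 a) (upd u i0 b) =
  (b - a) * \prod_(i < n | (i != j) && (i != i0)) (u i - l i).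
Proof.
move=> i0j; rewrite (face_vol_split (i0 := i0)) // /upd !eqxx; congr (_ * _).
by apply: eq_bigr => i /andP [_ /negbTE ->].
Qed.

Lemma strip_index (l w z : R) (M : nat) : (0 < M)%N -> l <= z <= l + M%:R * w ->
  exists2 g, (g < M)%N & l + g%:R * w <= z <= l + g.+1%:R * w.
Proof.
elim: M => [//|M IHM] _ /andP [lz zM].
have [M0|M_gt0] := posnP M; first by exists 0%N; rewrite // mul0r addr0 lz -M0.
have [zm|mz] := lerP z (l + M%:R * w).
  by have [g gM zg] := IHM M_gt0 (introT andP (conj lz zm)); exists g => //; exact: ltnW.
by exists M; rewrite // (ltW mz).
Qed.

Lemma sum_ord_lt_const (C : R) K M : \sum_(g < K) (if (g < M)%N then C else 0) = C *+ minn K M.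
Proof.
elim: K => [|K IHK]; first by rewrite big_ord0 min0n.
rewrite big_ord_recr /= IHK; case: ltnP => KM.
  by rewrite -mulrSr; congr (_ *+ _); lia.
by rewrite addr0; congr (_ *+ _); lia.
Qed.

Lemma box_cover_slab_axis j c l u t delta eta :
    c j = 1 -> (forall i, i != j -> c i = 0) ->
    (forall i, l i <= u i) -> 0 <= delta -> 0 < eta ->
  box_cover (slab c l u t delta) ((2 * delta + eta) * face_vol j l u).
Proof.
move=> cj c0 lu delta_ge0 eta_gt0.
have sum_cx (x : 'rV[R]_n) : \sum_i c i * x ord0 i = x ord0 j.
  by rewrite (bigD1 j) //= cj mul1r big1 ?addr0 // => i /c0 ->; rewrite mul0r.
have face_ge0 : 0 <= face_vol j l u by apply: prodr_ge0 => i _; rewrite subr_ge0.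
have vol : \prod_i (upd u j (t + delta) i - upd l j (t - delta) i) = 2 * delta * face_vol j l u.
  rewrite (bigD1 j) //= /upd eqxx; congr (_ * _); first ring.
  by apply: eq_bigr => i /negbTE ->.
apply: box_cover_le (_ : 2 * delta * face_vol j l u <= _) _.
  by rewrite ler_wpM2r //; lra.
rewrite -vol; apply: (box_cover_box (leq_ltn_trans (leq0n j) (ltn_ord j))).
  by move=> i; rewrite /upd; case: eqP => _ //; lra.
move=> x [xbox]; rewrite sum_cx ler_norml => /andP [lo hi] i; rewrite /upd.
by case: eqP => [->|_]; [apply/andP; split; lra | exact: xbox].
Qed.

Lemma slab_sub_strips i0 c l u t delta (M : nat) (w : R) :
    (0 < M)%N -> M%:R * w = u i0 - l i0 ->
  slab c l u t delta `<=` \bigcup_(g in `I_M)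
    slab (upd c i0 0) (upd l i0 (l i0 + g%:R * w)) (upd u i0 (l i0 + g.+1%:R * w))
         (t - c i0 * (l i0 + g%:R * w)) (delta + `|c i0| * w).
Proof.
move=> M_gt0 Mw x [xbox xslab]; have /andP [x_lo x_hi] := xbox i0.
have [g gM /andP [xg_lo xg_hi]] : exists2 g, (g < M)%N &
    l i0 + g%:R * w <= x ord0 i0 <= l i0 + g.+1%:R * w.
  by apply: strip_index; rewrite // Mw addrC subrK x_lo x_hi.
exists g => //; split.
  by move=> i; rewrite /upd; case: eqP => [->|_]; rewrite ?xg_lo ?xg_hi ?xbox.
have -> : \sum_i upd c i0 0 i * x ord0 i - (t - c i0 * (l i0 + g%:R * w))
    = (\sum_i c i * x ord0 i - t) - c i0 * (x ord0 i0 - (l i0 + g%:R * w)).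
  rewrite (bigD1 i0) //= [in RHS](bigD1 i0) //= /upd eqxx mul0r add0r.
  by rewrite (eq_bigr (fun i => c i * x ord0 i)) => [|i /negbTE ->] //; ring.
apply: le_trans (ler_normB _ _) _; rewrite lerD // normrM ler_wpM2l //.
by move: xg_hi; rewrite -natr1 mulrDl mul1r => xg_hi; rewrite ger0_norm; lra.
Qed.

(* Cut the slab into [M] strips across coordinate [i0]; on each strip [c i0 * x i0] varies by
   at most [|c i0| w], so dropping that term costs a thickening that vanishes as [M] grows. *)
Lemma box_cover_slab_step j i0 c l u t delta eta : i0 != j ->
    (forall l' u' t' delta' eta', (forall i, l' i <= u' i) -> 0 <= delta' -> 0 < eta' ->
       box_cover (slab (upd c i0 0) l' u' t' delta') ((2 * delta' + eta') * face_vol j l' u')) ->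
    (forall i, l i <= u i) -> 0 <= delta -> 0 < eta ->
  box_cover (slab c l u t delta) ((2 * delta + eta) * face_vol j l u).
Proof.
move=> i0j cover' lu delta_ge0 eta_gt0.
set L := u i0 - l i0; set a0 := `|c i0|.
have L_ge0 : 0 <= L by rewrite subr_ge0.
have [M M_gt0 M_large] : exists2 M : nat, (0 < M)%N & 4 * a0 * L < M%:R * eta.
  have q_ge0 : 0 <= 4 * a0 * L / eta by rewrite divr_ge0 ?mulr_ge0 ?normr_ge0 ?ler0n // ltW.
  exists (Num.Def.archi_bound (4 * a0 * L / eta)).+1 => //.
  by rewrite -ltr_pdivrMr // (lt_trans (archi_boundP q_ge0)) // ltr_nat.
have M_pos : 0 < M%:R :> R by rewrite ltr0n.
pose w := L / M%:R.
have Mw : M%:R * w = L by rewrite /w mulrCA divff ?mulr1 // gt_eqF.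
have w_ge0 : 0 <= w by rewrite divr_ge0 // ltW.
have a0w : 2 * a0 * w <= eta / 2.
  have : M%:R * (4 * a0 * w) < M%:R * eta.
    have -> : M%:R * (4 * a0 * w) = 4 * a0 * (M%:R * w) by ring.
    by rewrite Mw.
  by rewrite ltr_pM2l //; lra.
pose Rr := \prod_(i < n | (i != j) && (i != i0)) (u i - l i).
have Rr_ge0 : 0 <= Rr by apply: prodr_ge0 => i _; rewrite subr_ge0.
pose C := (2 * (delta + a0 * w) + eta / 2) * (w * Rr).
pose strip g := slab (upd c i0 0) (upd l i0 (l i0 + g%:R * w)) (upd u i0 (l i0 + g.+1%:R * w))
  (t - c i0 * (l i0 + g%:R * w)) (delta + a0 * w).
have n_gt0 : (0 < n)%N := leq_ltn_trans (leq0n j) (ltn_ord j).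
apply: (box_cover_bigcup n_gt0 (B := fun g => if (g < M)%N then strip g else set0)
  (V := fun g => if (g < M)%N then C else 0)).
- move=> x /(slab_sub_strips M_gt0 Mw) [g gM xg]; exists g => //.
  by move: gM; rewrite /= => ->.
- move=> g; case: ifP => gM; last exact: box_cover0.
  have -> : C = (2 * (delta + a0 * w) + eta / 2) *
      face_vol j (upd l i0 (l i0 + g%:R * w)) (upd u i0 (l i0 + g.+1%:R * w)).
    by rewrite face_vol_upd // -/Rr -natr1; congr (_ * (_ * _)); ring.
  apply: cover' => [i||]; last 2 first.
  + by rewrite addr_ge0 ?mulr_ge0 ?normr_ge0.
  + by rewrite divr_gt0.
  rewrite /upd; case: eqP => _ //.
  by rewrite lerD2l ler_wpM2r // ler_nat.
move=> K; rewrite sum_ord_lt_const; apply: le_trans (_ : C *+ M <= _).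
  apply: ler_wpMn2l; last exact: geq_minr.
  apply: mulr_ge0; last exact: mulr_ge0.
  have : 0 <= a0 * w by rewrite mulr_ge0 ?normr_ge0.
  lra.
have -> : C *+ M = (2 * delta + 2 * a0 * w + eta / 2) * ((M%:R * w) * Rr).
  by rewrite -mulr_natl /C; ring.
by rewrite (face_vol_split (i0 := i0)) // -/Rr -/L -Mw ler_wpM2r ?mulr_ge0 //; lra.
Qed.
End Slabs.

Section Hyperplanes.
Variables (R : realType) (n : nat).

Lemma box_cover_slab j (S : seq 'I_n) (c l u : 'I_n -> R) t delta eta :
    c j = 1 -> (forall i, i != j -> i \notin S -> c i = 0) ->
    (forall i, l i <= u i) -> 0 <= delta -> 0 < eta ->
  box_cover (slab c l u t delta) ((2 * delta + eta) * face_vol j l u).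
Proof.
elim: S c l u t delta eta => [|i0 S IHS] c l u t delta eta cj c0.
  by apply: box_cover_slab_axis => // i ij; exact: c0.
have [i0j|i0j] := eqVneq i0 j.
  by apply: IHS => // i ij iS; apply: c0; rewrite // inE negb_or iS i0j ij.
apply: (@box_cover_slab_step _ _ j i0) => // l' u' t' delta' eta'.
apply: IHS; first by rewrite /upd eq_sym (negbTE i0j).
move=> i ij iS; rewrite /upd; case: eqP => // /eqP i_i0.
by apply: c0; rewrite // inE negb_or i_i0.
Qed.

Definition hyperplane (m : 'I_n -> int) : set 'rV[R]_n :=
  [set x | \sum_i (m i)%:~R * x ord0 i = 0].

Lemma lebesgue_null_hyperplane (m : 'I_n -> int) j : m j != 0 -> lebesgue_null (hyperplane m).
Proof.
move=> mj; have mjR : (m j)%:~R != 0 :> R by rewrite intr_eq0.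
pose c i : R := (m i)%:~R / (m j)%:~R.
pose cube (N : nat) := slab c (fun _ => - N%:R) (fun _ => N%:R) 0 0.
apply: (lebesgue_null_bigcup (leq_ltn_trans (leq0n j) (ltn_ord j)) (B := cube)).
  move=> x xm; have norm_ge0 : 0 <= \sum_i `|x ord0 i| by rewrite sumr_ge0.
  exists (Num.Def.archi_bound (\sum_i `|x ord0 i|)) => //; split => [i|].
    rewrite -ler_norml (le_trans _ (ltW (archi_boundP norm_ge0))) //.
    by rewrite (bigD1 i) //= lerDl sumr_ge0.
  rewrite subr0 (eq_bigr (fun i => (m i)%:~R * x ord0 i / (m j)%:~R)) => [|i _]; last first.
    by rewrite /c mulrAC.
  by rewrite -mulr_suml xm mul0r normr0.
move=> N eps eps_gt0; pose F := face_vol j (fun _ => - N%:R : R) (fun _ => N%:R).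
have N_ge0 : 0 <= N%:R :> R := ler0n _ _.
have F_ge0 : 0 <= F by apply: prodr_ge0 => i _; lra.
apply: box_cover_le (_ : (2 * 0 + eps / (F + 1)) * F <= eps) _.
  rewrite mulr0 add0r mulrAC ler_pdivrMr; last lra.
  by rewrite ler_wpM2l ?(ltW eps_gt0) //; lra.
apply: (box_cover_slab (S := enum 'I_n)) => //.
- by rewrite /c divff.
- by move=> i _; rewrite mem_enum.
- by move=> i; lra.
by rewrite divr_gt0 //; lra.
Qed.

Definition int_relation_set : set 'rV[R]_n :=
  [set x | exists2 m : {ffun 'I_n -> int}, (exists j, m j != 0) & hyperplane m x].

Lemma lebesgue_null_int_relation : (0 < n)%N -> lebesgue_null int_relation_set.
Proof.
pose B k := if @pickle_inv {ffun 'I_n -> int} k is Some m then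
  (if [exists j, m j != 0] then hyperplane m else set0) else set0.
move=> n_gt0; apply: (lebesgue_null_bigcup n_gt0 (B := B)).
  move=> x [m [j mj] xm]; exists (pickle m) => //.
  by rewrite /B pickleK_inv (_ : [exists j, m j != 0]) //; apply/existsP; exists j.
move=> k; rewrite /B; case: pickle_inv => [m|]; last exact: lebesgue_null0.
case: existsP => [[j mj]|_]; last exact: lebesgue_null0.
exact: lebesgue_null_hyperplane mj.
Qed.
End Hyperplanes.

(** * Exceptional points *)

Section Exceptional.
Variable R : realType.

Lemma sum_ord_indicator (F : nat -> R) N i : (i < N)%N ->
  \sum_(k < N) ((k == i :> nat)%:Z)%:~R * F k = F i.
Proof.
move=> iN; rewrite (bigD1 (Ordinal iN)) //= eqxx mul1r big1 ?addr0 // => k ki.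
by rewrite (_ : (k == i :> nat) = (k == Ordinal iN)) // (negbTE ki) mul0r.
Qed.

Lemma sum_take (s : seq R) K : (K <= size s)%N -> \sum_(y <- take K s) y = \sum_(i < K) s`_i.
Proof.
move=> Ks; rewrite (big_nth 0) size_takel // big_mkord.
by apply: eq_bigr => i _; rewrite nth_take.
Qed.

Lemma not_int_indep_relation (s : seq R) : ~ int_indep s ->
  exists c : nat -> int, (exists2 i, (i < size s)%N & c i != 0) /\
    \sum_(i < size s) (c i)%:~R * s`_i = 0.
Proof.
move=> dep; have [us|/(uniqPn 0) [i [j [ij js sij]]]] := boolP (uniq s).
  have [c rel [y ys cy]] : exists2 c : R -> int,
      \sum_(y <- s) (c y)%:~R * y = 0 & exists2 y, y \in s & c y != 0.
    apply: contrapT => no_rel; apply: dep; rewrite /int_indep; split => // c rel y ys.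
    by apply/eqP; apply: contra_notT no_rel => cy; exists c => //; exists y.
  exists (fun i => c s`_i); split; last by move: rel; rewrite (big_nth 0) big_mkord.
  by have [i is_ si] := nthP 0 ys; exists i; rewrite // si.
exists (fun k => (k == i)%:Z - (k == j)%:Z); split.
  by exists i; rewrite ?(ltn_trans ij js) // eqxx (ltn_eqF ij).
under eq_bigr do rewrite intrB mulrBl.
by rewrite sumrB !sum_ord_indicator ?sij ?subrr // (ltn_trans ij js).
Qed.

Lemma row_relation n (x : 'rV[R]_n) K (c : nat -> int) : (K <= n)%N ->
    (exists2 i, (i < K)%N & c i != 0) -> \sum_(i < K) (c i)%:~R * (row_seq x)`_i = 0 ->
  int_relation_set x.
Proof.
move=> Kn [i iK ci] rel; exists [ffun k : 'I_n => if (k < K)%N then c k else 0].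
  by exists (Ordinal (leq_trans iK Kn)); rewrite ffunE /= iK.
rewrite /hyperplane /= -[RHS]rel (big_ord_widen _ (fun i => (c i)%:~R * (row_seq x)`_i) Kn).
rewrite [RHS]big_mkcond; apply: eq_bigr => k _; rewrite ffunE nth_row_seq.
by case: ifP; rewrite ?mul0r.
Qed.

Lemma Dset_not_cvg_int_relation a b (x : 'rV[R]_(a + b)) : (0 < a)%N -> (2 <= b)%N -> Dset x ->
  ~ (exists y : 'rV[R]_(a + b), (fun k => iter k (@Tab R a b) x) @ \oo --> y /\
      (forall i : 'I_(a + b), (i <= a)%N -> y ord0 i = 0) /\
      (forall i : 'I_(a + b), (a < i)%N -> 0 < y ord0 i)) ->
  int_relation_set x.
Proof.
move=> a_gt0 b_ge2 xD not_cvg; set s := row_seq x.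
have a2 : (a.+2 <= a + b)%N by rewrite -addn2 leq_add2l.
have s_size : size s = (a + b)%N := size_row_seq x.
have [sum_eq|sum_neq] := eqVneq (\sum_(y <- take a.+1 s) y) s`_a.+1; last first.
  have dep : ~ int_indep (take a.+1 s) by move=> indep; apply: not_cvg; exact: Dset_cvg.
  have [c [[i i_lt ci] rel]] := not_int_indep_relation dep.
  have sz : size (take a.+1 s) = a.+1 by rewrite size_takel // s_size ltnW.
  apply: (row_relation (K := a.+1) (c := c)); first exact: ltnW.
    by exists i; rewrite // -sz.
  by rewrite -[RHS]rel sz; apply: eq_bigr => k _; rewrite nth_take.
apply: (row_relation (K := a.+2) (c := fun i => if (i <= a)%N then 1 else -1)) => //.
  by exists 0%N.
have a1_le : (a.+1 <= size s)%N by rewrite s_size ltnW.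
rewrite big_ord_recr /= ltnn mulN1r -sum_eq (sum_take a1_le).
rewrite (eq_bigr (fun i : 'I_a.+1 => s`_i)) ?subrr // => i _.
by rewrite -ltnS ltn_ord mul1r.
Qed.
End Exceptional.

Theorem lemma4p7 (R : realType) (a b : nat) (ha : (1 <= a)%N) (hb : (2 <= b)%N) :
  lebesgue_null
    [set x : 'rV[R]_(a + b) | @Dset R a b x /\
       ~ (exists y : 'rV[R]_(a + b),
            ((fun k : nat => iter k (@Tab R a b) x) @ \oo --> y) /\
            (forall i : 'I_(a + b), (i <= a)%N -> y ord0 i = 0) /\
            (forall i : 'I_(a + b), (a < i)%N -> 0 < y ord0 i))].
Proof.
have ab_gt0 : (0 < a + b)%N by rewrite addn_gt0 ha.
apply: (lebesgue_null_sub _ (@lebesgue_null_int_relation R (a + b) ab_gt0)) => x [xD not_cvg].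
exact: Dset_not_cvg_int_relation.
Qed.
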